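(* Let $k,r,p>0$ be integers and let $F:\mathbb{N}^k\to\mathbb{N}^r$ satisfy $|F(x)|\le \min(x)$ for all $x\in\mathbb{N}^k$. Then there exists a set $E\subseteq\mathbb{N}$ with $|E|=p$ such that $|F[E^k]|\le k^k\,p$, where $F[E^k]=\{F(x):x\in E^k\}$.
   Context: $\mathbb{N}=\{0,1,2,\dots\}$. For $x=(x_1,\dots,x_k)\in\mathbb{N}^k$, $\min(x)$ is the minimum coordinate of $x$ and $|x|$ is the maximum coordinate of $x$ (sup norm). For a finite set $S$, $|S|$ denotes its cardinality. *)

From mathcomp Require Import all_boot all_order.
From mathcomp Require Import finmap.
Set Implicit Arguments. Unset Strict Implicit. Unset Printing Implicit Defensive.
Local Open Scope fset_scope.

Definition vnorm (k : nat) (x : {ffun 'I_k -> nat}) : nat := \max_(i < k) x i.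

(* min(x) = minimum coordinate (only meaningful for k > 0; 0 when k = 0) *)
Definition vmin (k : nat) (x : {ffun 'I_k -> nat}) : nat :=
  foldr minn (head 0 (codom x)) (codom x).

Definition cube (k : nat) (E : {fset nat}) : seq {ffun 'I_k -> nat} :=
  [seq [ffun i => val (g i)] | g : {ffun 'I_k -> E}].

Definition image_cube (k r : nat) (F : {ffun 'I_k -> nat} -> {ffun 'I_r -> nat})
  (E : {fset nat}) : {fset {ffun 'I_r -> nat}} :=
  [fset F x | x in cube k E].

From mathcomp Require Import all_boot all_order finmap.
From Stdlib Require Import IndefiniteDescription Classical.
Set Implicit Arguments. Unset Strict Implicit. Unset Printing Implicit Defensive.

(* Repeated use of infinite Ramsey yields a_0 < a_1 < ... and infinite sets
   S_j containing every a_l with l > j, such that F, at points whose minimum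
   coordinate is a_j and whose other coordinates lie in S_j, depends only on
   the order pattern of the coordinates; the hypothesis |F x| <= min x makes
   the colouring by F finite.  Every x in E^k, E = {a_0, ..., a_(p-1)}, is of
   this form for j with a_j = min x, so F[E^k] consists of at most p * k^k
   values: one per index j < p and pattern 'I_k -> 'I_k. *)

Definition infinite (A : nat -> Prop) := forall n, exists m, n < m /\ A m.

Definition increasing_in (B : nat -> Prop) n (s : seq nat) :=
  [/\ sorted ltn s, size s = n & forall x, x \in s -> B x].

Lemma infinite_above (A : nat -> Prop) h :
  infinite A -> infinite (fun x => A x /\ h < x).
Proof.
move=> infA n; have [m [ltnm Am]] := infA (maxn n h).
by exists m; rewrite !(leq_ltn_trans _ ltnm) ?leq_maxl ?leq_maxr.
Qed.

Lemma infinite_pigeonhole (C : finType) (f : nat -> C) :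
  exists c, infinite (fun i => f i = c).
Proof.
apply: NNPP => noc.
have bound c : exists N, forall i, N < i -> f i <> c.
  apply: NNPP => nobound; apply: noc; exists c => n.
  apply: NNPP => hn; apply: nobound; exists n => i lt_ni fic.
  by apply: hn; exists i.
have [N hN] := functional_choice _ bound.
pose M := \max_c N c.
by apply: (hN (f M.+1) M.+1) => //; rewrite ltnS (leq_bigmax (f M.+1)).
Qed.

Lemma dependent_choice (T : Type) (R : T -> T -> Prop) (x0 : T) :
  (forall x, exists y, R x y) ->
  exists f : nat -> T, f 0 = x0 /\ forall n, R (f n) (f n.+1).
Proof.
by case/functional_choice => next Rnext; exists (fun n => iter n next x0).
Qed.

Lemma increasing_above (B : nat -> Prop) n m : infinite B ->
  exists s, increasing_in B n s /\ forall y, y \in s -> m < y.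
Proof.
move=> infB; elim: n m => [|n IHn] m; first by exists [::].
have [y [lt_my By]] := infB m.
have [s [[sorted_s size_s sB] gt_ys]] := IHn y.
exists (y :: s); split; first split.
- by rewrite /= path_sortedE ?sorted_s ?andbT; [apply/allP | exact: ltn_trans].
- by rewrite /= size_s.
- by move=> z; rewrite inE => /predU1P [->|/sB].
- by move=> z; rewrite inE => /predU1P [->|/gt_ys/(ltn_trans lt_my)].
Qed.

Lemma increasing_in_extend (B : nat -> Prop) n (V : seq nat) :
  infinite B -> (forall y, y \in V -> B y) -> size V <= n ->
  exists s, increasing_in B n s /\ {subset V <= s}.
Proof.
move=> infB VB le_Vn.
have [t [[sorted_t size_t tB] gt_t]] :=
  increasing_above (n - size (undup V)) (\max_(v <- V) v) infB.
have Vt_disj : ~~ has (mem (undup V)) t.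
  apply/hasPn => y /gt_t; apply: contraTN; rewrite /= mem_undup => Vy.
  by rewrite -leqNgt (leq_bigmax_seq (F := id)).
exists (sort leq (undup V ++ t)); split; first split.
- rewrite ltn_sorted_uniq_leq sort_uniq sort_sorted ?andbT; last exact: leq_total.
  by rewrite cat_uniq undup_uniq Vt_disj (sorted_uniq ltn_trans ltnn).
- rewrite size_sort size_cat size_t subnKC //.
  exact: leq_trans (size_undup V) le_Vn.
- by move=> x; rewrite mem_sort mem_cat mem_undup => /orP [/VB|/tB].
- by move=> v Vv; rewrite mem_sort mem_cat mem_undup Vv.
Qed.

Lemma exists_nested_sequence (P : nat -> (nat -> Prop) -> Prop) (A0 : nat -> Prop) :
  infinite A0 ->
  (forall A, infinite A -> exists h B,
     [/\ A h, forall x, B x -> A x /\ h < x, infinite B & P h B]) ->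
  exists (a : nat -> nat) (S : nat -> nat -> Prop),
    [/\ {homo a : i j / i < j}, forall i, A0 (a i),
        forall i j, i < j -> S i (a j), forall i, infinite (S i)
      & forall i, P (a i) (S i)].
Proof.
move=> infA0 step.
pose R (u v : nat * (nat -> Prop)) := infinite u.2 ->
  [/\ u.2 v.1, forall x, v.2 x -> u.2 x /\ v.1 < x, infinite v.2 & P v.1 v.2].
have [|f [f0 Rf]] := @dependent_choice _ R (0, A0).
  move=> [h A]; case: (classic (infinite A)) => [/step [h' [B hB]]|finA].
    by exists (h', B).
  by exists (h, A).
have infA n : infinite (f n).2 by elim: n => [|n /Rf []]; rewrite ?f0.
have {}Rf n := Rf n (infA n).
have shrink n x : (f n.+1).2 x -> (f n).2 x /\ (f n.+1).1 < x.
  by case: (Rf n) => _ + _ _; apply.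
have nested m n : m <= n -> forall x, (f n).2 x -> (f m).2 x.
  elim: n => [|n IHn]; first by rewrite leqn0 => /eqP ->.
  by rewrite leq_eqVlt => /predU1P [-> //|/IHn le_mn x /shrink [/le_mn]].
exists (fun i => (f i.+1).1), (fun i => (f i.+1).2); split.
- apply: homo_ltn => [i j l|i]; first exact: ltn_trans.
  by have [/shrink [_ ->]] := Rf i.+1.
- by move=> i; have [fa _ _ _] := Rf i; have := nested 0 i isT _ fa; rewrite f0.
- by move=> i j lt_ij; have [fa _ _ _] := Rf j; apply: nested fa.
- by move=> i; apply: infA.
- by move=> i; case: (Rf i).
Qed.

Lemma ramsey n (C : finType) (c : seq nat -> C) (A : nat -> Prop) : infinite A ->
  exists B col, [/\ forall x, B x -> A x, infinite B
                  & forall s, increasing_in B n s -> c s = col].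
Proof.
elim: n c A => [|n IHn] c A infA.
  by exists A, (c [::]); split=> // s [_ /size0nil ->].
pose P h B := exists col, forall s, increasing_in B n s -> c (h :: s) = col.
have [|a [S [inc_a A_a S_a _ P_a]]] := exists_nested_sequence (P := P) infA.
  move=> A' infA'; have [h [_ A'h]] := infA' 0.
  have [B [col [BA' infB Bcol]]] :=
    IHn (fun s => c (h :: s)) _ (infinite_above h infA').
  by exists h, B; split=> //; exists col.
have [colf colfP] := functional_choice _ P_a.
have [c0 inf_c0] := infinite_pigeonhole colf.
have ge_a i : i <= a i by elim: i => // i /leq_ltn_trans; apply; apply: inc_a.
exists (fun x => exists2 i, x = a i & colf i = c0), c0; split.
- by move=> _ [i -> _].
- move=> m; have [i [lt_mi colf_i]] := inf_c0 m.
  by exists (a i); split; [exact: leq_trans (ge_a i) | exists i].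
- case=> [[_ //]|y t [sorted_s [size_t] st]].
  have [i ey <-] := st _ (mem_head y t); rewrite ey in sorted_s *.
  apply: colfP; split=> //.
  + exact: path_sorted sorted_s.
  + move=> x tx; have [j ex _] := st x (mem_behead (s := y :: t) tx).
    rewrite ex; apply: S_a.
    move: sorted_s; rewrite /= path_sortedE; last exact: ltn_trans.
    by case/andP => /allP/(_ x tx) /=; rewrite ex (leqW_mono (leq_mono inc_a)).
Qed.

Lemma vmin_le k (x : {ffun 'I_k -> nat}) i : vmin x <= x i.
Proof.
rewrite /vmin; have : x i \in codom x by apply: codom_f.
elim: (codom x) (head 0 (codom x)) => // y s IHs d.
by rewrite inE /= geq_min => /predU1P [->|/IHs ->]; rewrite ?leqnn ?orbT.
Qed.

Lemma vnorm_ge k (x : {ffun 'I_k -> nat}) i : x i <= vnorm x.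
Proof. exact: (leq_bigmax (F := fun i => x i)). Qed.

Local Open Scope fset_scope.

Section Patterns.
Variables (k r : nat) (F : {ffun 'I_k.+1 -> nat} -> {ffun 'I_r -> nat}).
Hypothesis hF : forall x, vnorm (F x) <= vmin x.

(* A pattern g with a sequence s encodes the point whose i-th coordinate is the
   (g i)-th entry of h :: s; position 0 holds the intended minimum h. *)
Definition pattern := {ffun 'I_k.+1 -> 'I_k.+1}.

Definition pattern_point (h : nat) (s : seq nat) (g : pattern) : {ffun 'I_k.+1 -> nat} :=
  [ffun i => nth 0 (h :: s) (g i)].

Definition pattern_of (h : nat) (s : seq nat) (x : {ffun 'I_k.+1 -> nat}) : pattern :=
  [ffun i => inord (index (x i) (h :: s))].

Lemma pattern_ofK h s (x : {ffun 'I_k.+1 -> nat}) :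
  size s = k -> (forall i, x i \in h :: s) -> pattern_point h s (pattern_of h s x) = x.
Proof.
move=> size_s x_in; apply/ffunP => i; rewrite !ffunE inordK ?nth_index //.
by have := x_in i; rewrite -index_mem /= size_s.
Qed.

Definition pattern_invariant (h : nat) (B : nat -> Prop) :=
  forall s s' (g : pattern), increasing_in B k s -> increasing_in B k s' ->
    ord0 \in codom g -> F (pattern_point h s g) = F (pattern_point h s' g).

Lemma F_pattern_point_le h s (g : pattern) i :
  ord0 \in codom g -> F (pattern_point h s g) i <= h.
Proof.
case/codomP => i0 g_i0; apply: leq_trans (vnorm_ge _ i) _.
apply: leq_trans (hF _) _; apply: leq_trans (vmin_le _ i0) _.
by rewrite ffunE -g_i0.
Qed.

(* Colour s by all the values of F at the points of pattern type, truncated to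
   'I_h.+1; the truncation is harmless when some coordinate is h. *)
Lemma exists_pattern_invariant (A : nat -> Prop) : infinite A ->
  exists h B, [/\ A h, forall x, B x -> A x /\ h < x, infinite B & pattern_invariant h B].
Proof.
move=> infA; have [h [_ Ah]] := infA 0.
pose col s := [ffun g => [ffun i => inord (F (pattern_point h s g) i) : 'I_h.+1]].
have [B [col0 [BA infB Bcol]]] := ramsey k col (infinite_above h infA).
exists h, B; split=> // s s' g Bs Bs' g0; apply/ffunP => i.
have /ffunP/(_ g)/ffunP/(_ i) := etrans (Bcol s Bs) (esym (Bcol s' Bs')).
by rewrite !ffunE => /(congr1 val); rewrite /= !inordK ?ltnS ?F_pattern_point_le.
Qed.

Variables (a : nat -> nat) (S : nat -> nat -> Prop).
Hypotheses (inc_a : {homo a : i j / i < j}) (S_a : forall i j, i < j -> S i (a j))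
  (infS : forall i, infinite (S i)) (inv_a : forall i, pattern_invariant (a i) (S i)).

Definition ref_tuple j := [seq a l | l <- iota j.+1 k].

Lemma ref_tuple_increasing j : increasing_in (S j) k (ref_tuple j).
Proof.
split; first exact: homo_sorted inc_a _ (iota_ltn_sorted _ _).
- by rewrite size_map size_iota.
- by move=> y /mapP [l]; rewrite mem_iota => /andP [lt_jl _] ->; apply: S_a.
Qed.

Lemma F_eq_ref_pattern_point p (x : {ffun 'I_k.+1 -> nat}) :
  (forall i, exists2 l, l < p & x i = a l) ->
  exists (j : 'I_p) (g : pattern), F x = F (pattern_point (a j) (ref_tuple j) g).
Proof.
move=> x_a; case: (arg_minnP (fun i => x i) (isT : xpredT ord0)) => i0 _ min_i0.
have [j lt_jp x_i0] := x_a i0.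
pose V := [seq y <- codom x | a j < y].
have VS y : y \in V -> S j y.
  rewrite mem_filter => /andP [/= lt_ajy /codomP [i y_xi]].
  have [l _ x_i] := x_a i.
  by move: lt_ajy; rewrite y_xi x_i (leqW_mono (leq_mono inc_a)); apply: S_a.
have size_V : size V <= k.
  have : 0 < count (predC (fun y => a j < y)) (codom x).
    by rewrite -has_count; apply/hasP; exists (x i0); rewrite ?codom_f //= x_i0 ltnn.
  have := count_predC (fun y => a j < y) (codom x).
  rewrite size_codom card_ord size_filter => sum_k pos.
  by rewrite -ltnS -[X in _ <= X]sum_k -addn1 leq_add2l.
have [s [inc_s V_s]] := increasing_in_extend (infS j) VS size_V.
have x_in i : x i \in a j :: s.
  rewrite inE; case: ltngtP (min_i0 i isT) => // [lt_x|<-]; last by rewrite x_i0 eqxx.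
  by rewrite V_s ?orbT // mem_filter -x_i0 lt_x codom_f.
have [_ size_s _] := inc_s.
exists (Ordinal lt_jp), (pattern_of (a j) s x); rewrite -{1}(pattern_ofK size_s x_in).
apply: inv_a => //; first exact: ref_tuple_increasing.
by apply/codomP; exists i0; apply: val_inj; rewrite /= ffunE x_i0 /= eqxx inordK.
Qed.

End Patterns.

Theorem theorem0p1 (k r p : nat) (hk : 0 < k) (hr : 0 < r) (hp : 0 < p)
  (F : {ffun 'I_k -> nat} -> {ffun 'I_r -> nat})
  (hF : forall x, vnorm (F x) <= vmin x) :
  exists E : {fset nat}, #|` E| = p /\ #|` image_cube F E| <= k ^ k * p.
Proof.
case: k hk F hF => // k _ F hF.
have infT : infinite (fun _ => True) by move=> n; exists n.+1.
have [a [S [inc_a _ S_a infS inv_a]]] :=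
  exists_nested_sequence infT (exists_pattern_invariant hF).
pose Phi (z : 'I_p * pattern k) := F (pattern_point (a z.1) (ref_tuple k a z.1) z.2).
exists [fset a (val j) | j : 'I_p]; split.
  rewrite card_imfset /= -?cardE ?card_ord // => i j /(incn_inj (leq_mono inc_a)).
  exact: val_inj.
have sub :
    image_cube F [fset a (val j) | j : 'I_p] `<=` [fset Phi z | z : 'I_p * pattern k].
  apply/fsubsetP => _ /imfsetP [_ /mapP [u _ ->] ->].
  have [|j [g ->]] :=
    F_eq_ref_pattern_point inc_a S_a infS inv_a (p := p) (x := [ffun i => val (u i)]).
    by move=> i; rewrite ffunE; case/imfsetP: (fsvalP (u i)) => j _ u_i; exists j.
  by apply/imfsetP; exists (j, g).
rewrite (leq_trans (fsubset_leq_card sub)) // (leq_trans (leq_imfset_card _ _ _)) //.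
by rewrite /= -cardE card_prod card_ffun !card_ord mulnC.
Qed.
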